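(* For any $P,Q\in\mathcal{PP}(n)$, $P\leq Q$ if and only if $\iota(Q)\leq\iota(P)$.
   Context: A plane poset is a finite set with two partial orders $\leq_h,\leq_r$ such that two distinct elements are $\leq_h$-comparable iff they are not $\leq_r$-comparable; $\mathcal{PP}(n)$ is the set of isomorphism classes of plane posets with $n$ elements. On a plane poset, $x\leq y$ iff ($x\leq_h y$ or $x\leq_r y$) is a total order (known fact). For $P,Q\in\mathcal{PP}(n)$, $\theta_{P,Q}$ is the increasing bijection $P\to Q$, and $P\leq Q$ means: for all $x,y\in P$, $\theta_{P,Q}(x)\leq_h\theta_{P,Q}(y)$ in $Q$ implies $x\leq_h y$ in $P$. For a plane poset $P=(P,\leq_h,\leq_r)$, $\iota(P)=(P,\leq_r,\leq_h)$ (the two orders exchanged); it is again a plane poset and $\iota$ is an involution. *)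

From mathcomp Require Import all_boot.
Set Implicit Arguments. Unset Strict Implicit. Unset Printing Implicit Defensive.

(* A plane poset with n elements, represented on the carrier 'I_n.
   Every isomorphism class in PP(n) has such a representative, and the
   relation [ppleq] below only depends on isomorphism classes. *)

Definition is_porder (T : finType) (r : rel T) :=
  [/\ reflexive r, antisymmetric r & transitive r].

Definition plane_cond (T : finType) (rh rr : rel T) :=
  forall x y : T, x != y -> (rh x y || rh y x) = ~~ (rr x y || rr y x).

Record plane_poset (n : nat) := PlanePoset {
  hle : rel 'I_n;
  rle : rel 'I_n;
  hle_po : is_porder hle;
  rle_po : is_porder rle;
  plane : plane_cond hle rle }.

Lemma plane_cond_swap (T : finType) (rh rr : rel T) :
  plane_cond rh rr -> plane_cond rr rh.
Proof. by move=> H x y /H ->; rewrite negbK. Qed.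

Definition pp_iota n (P : plane_poset n) : plane_poset n :=
  @PlanePoset n (rle P) (hle P) (rle_po P) (hle_po P) (plane_cond_swap (plane P)).

Definition tle n (P : plane_poset n) (x y : 'I_n) := hle P x y || rle P x y.
Definition tlt n (P : plane_poset n) (x y : 'I_n) := (x != y) && tle P x y.

Definition rank n (P : plane_poset n) (x : 'I_n) : nat :=
  #|[pred y | tlt P y x]|.

(* P <= Q : theta_{P,Q} is the increasing bijection P -> Q, i.e. the
   rank-preserving map; theta(x) = x' iff rank_Q x' = rank_P x. *)
Definition ppleq n (P Q : plane_poset n) : Prop :=
  forall x y x' y' : 'I_n,
    rank Q x' = rank P x -> rank Q y' = rank P y ->
    hle Q x' y' -> hle P x y.

(* Since [x <= y] iff [x <=_h y] or [x <=_r y] is a total order, theta_{P,Q} is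
   also the increasing bijection of iota(P) onto iota(Q).  Let P <= Q and
   [x <=_r y] in P with x <> y.  Then theta x < theta y in Q.  If theta x and
   theta y were h-comparable in Q, then x and y would be h-comparable in P,
   which is impossible for distinct r-comparable elements; so they are
   r-comparable, and as theta x < theta y this forces [theta x <=_r theta y].
   This is iota(Q) <= iota(P); the converse follows since iota is an
   involution. *)
From mathcomp Require Import all_boot.
Set Implicit Arguments. Unset Strict Implicit.

Section PlanePoset.
Variables (n : nat) (P : plane_poset n).

Lemma hle_refl x : hle P x x. Proof. by case: (hle_po P). Qed.
Lemma rle_refl x : rle P x x. Proof. by case: (rle_po P). Qed.

Lemma hle_trans y x z : hle P x y -> hle P y z -> hle P x z.
Proof. by case: (hle_po P) => _ _; apply. Qed.
Lemma rle_trans y x z : rle P x y -> rle P y z -> rle P x z.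
Proof. by case: (rle_po P) => _ _; apply. Qed.

Lemma hle_anti x y : hle P x y -> hle P y x -> x = y.
Proof. by case: (hle_po P) => _ anti _ hxy hyx; apply: anti; rewrite hxy hyx. Qed.
Lemma rle_anti x y : rle P x y -> rle P y x -> x = y.
Proof. by case: (rle_po P) => _ anti _ rxy ryx; apply: anti; rewrite rxy ryx. Qed.

Lemma hcomparable_rcomparable x y :
  x != y -> hle P x y || hle P y x -> rle P x y || rle P y x -> False.
Proof. by move=> /(plane P) hr h r; move: hr; rewrite h r. Qed.

Lemma tle_trans_hle_rle y x z : hle P x y -> rle P y z -> tle P x z.
Proof.
move=> hxy ryz; rewrite /tle.
have [->|nxz] := eqVneq x z; first by rewrite hle_refl.
have [exy|nxy] := eqVneq x y; first by rewrite exy ryz orbT.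
have [eyz|nyz] := eqVneq y z; first by rewrite -eyz hxy.
case/boolP: (hle P x z || rle P x z) => // /norP[/negbTE nhxz /negbTE nrxz].
move: (plane P nxz); rewrite nhxz nrxz /=; case/boolP: (hle P z x) => [hzx|_] /=.
- by case: (hcomparable_rcomparable nyz); rewrite ?(hle_trans hzx hxy) ?ryz ?orbT.
- move/esym/negbFE=> rzx.
  by case: (hcomparable_rcomparable nxy); rewrite ?hxy ?(rle_trans ryz rzx) ?orbT.
Qed.

Lemma tle_anti x y : tle P x y -> tle P y x -> x = y.
Proof.
have [//|nxy] := eqVneq x y; rewrite /tle.
case/orP=> [hxy|rxy]; case/orP=> [hyx|ryx]; first exact: hle_anti.
- by case: (hcomparable_rcomparable nxy); rewrite ?hxy ?ryx ?orbT.
- by case: (hcomparable_rcomparable nxy); rewrite ?hyx ?rxy ?orbT.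
- exact: rle_anti.
Qed.

Lemma tle_total x y : x != y -> tle P x y || tle P y x.
Proof.
move/(plane P); rewrite /tle.
by case: (hle P x y); case: (hle P y x); case: (rle P x y); case: (rle P y x).
Qed.

End PlanePoset.

Lemma tle_iota n (P : plane_poset n) x y : tle (pp_iota P) x y = tle P x y.
Proof. exact: orbC. Qed.

Lemma rank_iota n (P : plane_poset n) x : rank (pp_iota P) x = rank P x.
Proof. by apply: eq_card => y; rewrite !inE /tlt tle_iota. Qed.

(* The mixed case [x <=_r y <=_h z] is the case above for iota(P). *)
Lemma tle_trans n (P : plane_poset n) y x z : tle P x y -> tle P y z -> tle P x z.
Proof.
rewrite {1 2}/tle; case/orP=> [hxy|rxy]; case/orP=> [hyz|ryz].
- by rewrite /tle (hle_trans hxy hyz).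
- exact: tle_trans_hle_rle hxy ryz.
- by rewrite -tle_iota; apply: (tle_trans_hle_rle (P := pp_iota P)) rxy hyz.
- by rewrite /tle (rle_trans rxy ryz) orbT.
Qed.

Section Rank.
Variables (n : nat) (P : plane_poset n).

Lemma rank_lt x y : tlt P x y -> rank P x < rank P y.
Proof.
case/andP=> nxy txy; apply/proper_card/properP; split.
- apply/subsetP => z; rewrite !inE => /andP[nzx tzx].
  rewrite /tlt (tle_trans tzx txy) andbT; apply: contraNneq nxy => ezy.
  by apply/eqP/(tle_anti txy); rewrite -ezy.
- by exists x; rewrite !inE /tlt ?eqxx //= nxy txy.
Qed.

Lemma rank_inj : injective (rank P).
Proof.
move=> x y exy; apply/eqP; apply: contraT => nxy.
case/orP: (tle_total P nxy) => [txy|tyx].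
- by have := @rank_lt x y; rewrite /tlt nxy txy exy ltnn => /(_ isT).
- by have := @rank_lt y x; rewrite /tlt eq_sym nxy tyx exy ltnn => /(_ isT).
Qed.

End Rank.

Lemma ppleq_iota n (P Q : plane_poset n) :
  ppleq P Q -> ppleq (pp_iota Q) (pp_iota P).
Proof.
move=> lePQ a b a' b'; rewrite !rank_iota /= => ea eb ra'b'.
have [->|nab] := eqVneq a b; first exact: rle_refl.
have na'b' : a' != b'.
  by apply: contraNneq nab => ea'b'; apply/eqP/(@rank_inj _ Q); rewrite -ea -eb ea'b'.
have hQab : ~~ (hle Q a b || hle Q b a).
  apply/negP => hab; apply: (hcomparable_rcomparable (P := P) na'b'); last by rewrite ra'b'.
  by case/orP: hab => [hab|hba]; [rewrite (lePQ a' b' a b) | rewrite (lePQ b' a' b a) ?orbT].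
move: (plane Q nab); rewrite (negbTE hQab) => /esym/negbFE/orP[//|rba].
have lt_ab' : rank P a' < rank P b' by apply: rank_lt; rewrite /tlt na'b' /tle ra'b' orbT.
have lt_ba : rank Q b < rank Q a by apply: rank_lt; rewrite /tlt eq_sym nab /tle rba orbT.
by move: lt_ab'; rewrite ea eb ltnNge (ltnW lt_ba).
Qed.

Theorem proposition18 (n : nat) (P Q : plane_poset n) :
  ppleq P Q <-> ppleq (pp_iota Q) (pp_iota P).
Proof.
split; first exact: ppleq_iota.
(* [pp_iota (pp_iota P)] has the orders of [P], so [ppleq] sees them as convertible. *)
exact: (@ppleq_iota n (pp_iota Q) (pp_iota P)).
Qed.
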